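(* Let $\mathcal F$ be a nonempty hereditary family of finite subsets of $\mathbb N$. Then there is an infinite set $M\subset\mathbb N$ such that one of the following holds: (a) there is $d\in\mathbb N\cup\{0\}$ such that $\mathcal F\cap\mathcal P(M)=[M]^{\le d}$; (b) there is a strictly increasing map $f\colon M\to\mathbb N$ such that $\{F\subset M: F\text{ finite nonempty},\ \#F\le f(\min F)\}\subset\mathcal F$.
   Context: A family $\mathcal F$ of sets is hereditary if $B\in\mathcal F$ whenever $B\subset A$ and $A\in\mathcal F$. $\mathcal P(M)$ is the power set of $M$ and $[M]^{\le d}$ is the family of all subsets of $M$ of cardinality at most $d$. *)

From mathcomp Require Import all_boot all_order.
From mathcomp Require Import finmap.
Set Implicit Arguments. Unset Strict Implicit. Unset Printing Implicit Defensive.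
Local Open Scope fset_scope.

Definition hereditary (F : {fset nat} -> Prop) : Prop :=
  forall A B : {fset nat}, B `<=` A -> F A -> F B.

Definition infinite_nat (M : nat -> Prop) : Prop :=
  forall n, exists m, n <= m /\ M m.

Definition fsub_of (A : {fset nat}) (M : nat -> Prop) : Prop :=
  forall x, x \in A -> M x.

Definition is_fmin (m : nat) (A : {fset nat}) : Prop :=
  m \in A /\ forall x, x \in A -> m <= x.

Definition strictly_increasing_on (M : nat -> Prop) (f : nat -> nat) : Prop :=
  forall x y, M x -> M y -> x < y -> f x < f y.

From mathcomp Require Import all_boot.
From mathcomp Require Import finmap.
From Stdlib Require Import Classical ClassicalEpsilon.
Local Open Scope fset_scope.

(* If no infinite M has F restricted to P(M) equal to some [M]^{<=d}, then
   whenever all sets of size <= k of an infinite N lie in F, Ramsey's theorem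
   for (k+1)-sets yields an infinite M inside N all of whose (k+1)-sets lie in
   F: the other colour would give F restricted to P(M) = [M]^{<=k}, F being
   hereditary.  A diagonal iteration of this step produces a_0 < a_1 < ...
   such that every set of size <= j inside {a_j, a_(j+1), ...} is in F, so
   M = {a_j | j} and f(a_j) = j satisfy (b).  Ramsey's theorem is proved by
   the same diagonal construction. *)

Definition included (N' N : nat -> Prop) : Prop := forall x, N' x -> N x.

Definition above (N : nat -> Prop) (a : nat) : nat -> Prop :=
  fun x => N x /\ a < x.

Definition image_of (a : nat -> nat) (I : nat -> Prop) : nat -> Prop :=
  fun x => exists2 i, I i & x = a i.

Definition monochromatic (c : {fset nat} -> Prop) (k : nat) (M : nat -> Prop)
    (b : bool) : Prop :=
  forall A, fsub_of A M -> #|` A| = k -> (c A <-> b).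

Definition small_sets_in (F : {fset nat} -> Prop) (k : nat) (M : nat -> Prop)
    : Prop :=
  forall A, fsub_of A M -> #|` A| <= k -> F A.

Lemma included_trans {N1 N2 N3} :
  included N1 N2 -> included N2 N3 -> included N1 N3.
Proof. by move=> sub12 sub23 x /sub12 /sub23. Qed.

Lemma included_above N a : included (above N a) N.
Proof. by move=> x []. Qed.

Lemma infinite_above N a : infinite_nat N -> infinite_nat (above N a).
Proof.
move=> infN n; have [m [le_m Nm]] := infN (maxn n a.+1).
by exists m; move: le_m; rewrite /above geq_max => /andP[-> ->].
Qed.

Lemma infinite_pigeonhole (R : nat -> bool -> Prop) :
  (forall j, exists b, R j b) -> exists b, infinite_nat (fun j => R j b).
Proof.
move=> someR; case: (classic (infinite_nat (fun j => R j true))) => [|finT].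
  by exists true.
have [n0 noT] := not_all_ex_not _ _ finT.
exists false => n; have [[] Rb] := someR (maxn n n0).
  by case: noT; exists (maxn n n0); rewrite leq_maxr.
by exists (maxn n n0); rewrite leq_maxl.
Qed.

Lemma monochromatic_sub c k M M' b :
  included M' M -> monochromatic c k M b -> monochromatic c k M' b.
Proof. by move=> subM monoM A AM'; apply: monoM => x /AM' /subM. Qed.

Lemma small_sets_in_sub F k M M' :
  included M' M -> small_sets_in F k M -> small_sets_in F k M'.
Proof. by move=> subM smallM A AM'; apply: smallM => x /AM' /subM. Qed.

Lemma fmin_exists (A : {fset nat}) : A != fset0 -> exists m, is_fmin m A.
Proof.
case/fset0Pn => x xA; have [m mA min_m] := ex_minnP (ex_intro _ x xA).
by exists m; split=> // y /min_m.
Qed.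

Lemma fsubset_of_card (K : choiceType) (A : {fset K}) n :
  n <= #|` A| -> exists2 B, B `<=` A & #|` B| = n.
Proof.
move=> le_n; exists [fset x in take n A].
  by apply/fsubsetP => x; rewrite inE => /mem_take.
by rewrite card_fseq undup_id ?take_uniq ?fset_uniq // size_take_min; apply/minn_idPl.
Qed.

Lemma fsubD1_image a j (A : {fset nat}) :
  fsub_of A (image_of a (fun i => j <= i)) ->
  fsub_of (A `\ a j) (image_of a (fun i => j < i)).
Proof.
move=> Aj x; rewrite in_fsetD1 => /andP[x_neq xA].
have [i le_ji def_x] := Aj x xA; exists i => //.
rewrite ltn_neqAle le_ji andbT; apply: contraNneq x_neq => eq_ji.
by rewrite def_x eq_ji.
Qed.

Section IncreasingSequence.

Context {a : nat -> nat} (a_incr : {homo a : i j / i < j}).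

Lemma incr_ge_id i : i <= a i.
Proof. by elim: i => // i IH; apply: leq_ltn_trans IH (a_incr _ _ (ltnSn i)). Qed.

Lemma infinite_image I : infinite_nat I -> infinite_nat (image_of a I).
Proof.
move=> infI n; have [i [le_ni Ii]] := infI n.
by exists (a i); split; [apply: leq_trans le_ni (incr_ge_id i) | exists i].
Qed.

Lemma fsub_image_from_min {I j} {A : {fset nat}} :
  fsub_of A (image_of a I) -> is_fmin (a j) A ->
  fsub_of A (image_of a (fun i => j <= i)).
Proof.
move=> AI [_ min_aj] x xA; have [i _ def_x] := AI x xA.
by exists i => //; rewrite -(leq_mono a_incr) -def_x min_aj.
Qed.

Lemma exists_geq_incr x : exists i, x <= a i.
Proof. by exists x; apply: incr_ge_id. Qed.

Definition index_in x : nat := ex_minn (exists_geq_incr x).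

Lemma index_in_incr j : index_in (a j) = j.
Proof.
rewrite /index_in; case: ex_minnP => i le_aji min_i.
by apply/anti_leq; rewrite min_i // -(leq_mono a_incr).
Qed.

Lemma index_in_increasing I : strictly_increasing_on (image_of a I) index_in.
Proof.
move=> _ _ [i _ ->] [j _ ->].
by rewrite !index_in_incr (leqW_mono (leq_mono a_incr)).
Qed.

End IncreasingSequence.

Section DiagonalSequence.

Variables (S : nat -> (nat -> Prop) -> Prop)
          (T : nat -> nat -> (nat -> Prop) -> Prop).
Hypothesis S_antitone : forall {k N N'}, included N' N -> S k N -> S k N'.
Hypothesis T_antitone : forall {k x N N'}, included N' N -> T k x N -> T k x N'.
Hypothesis extend : forall {k} x {N}, S k N -> infinite_nat N ->
  exists N', [/\ included N' N, infinite_nat N', S k.+1 N' & T k x N'].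

Lemma diagonal_sequence N0 : S 0 N0 -> infinite_nat N0 ->
  exists a, {homo a : i j / i < j} /\
    forall j, S j (image_of a (fun i => j <= i)) /\
              T j (a j) (image_of a (fun i => j < i)).
Proof.
move=> S0 inf0.
pose pick (N : nat -> Prop) := epsilon (inhabits 0) N.
pose next_ok k N N' :=
  [/\ included N' (above N (pick N)), infinite_nat N', S k.+1 N' & T k (pick N) N'].
pose next k N := epsilon (inhabits N) (next_ok k N).
pose Ns := fix Ns k := if k is k'.+1 then next k' (Ns k') else N0.
pose a k := pick (Ns k).
have pickP N : infinite_nat N -> N (pick N).
  by move=> infN; apply: epsilon_spec; have [x [_ Nx]] := infN 0; exists x.
have nextP k N : S k N -> infinite_nat N -> next_ok k N (next k N).
  move=> SN infN; apply: epsilon_spec.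
  have SN_above := S_antitone (included_above N (pick N)) SN.
  have [N' [subN' infN' SN' TN']] :=
    extend (pick N) SN_above (infinite_above _ (pick N) infN).
  by exists N'.
have Ns_inv k : S k (Ns k) /\ infinite_nat (Ns k).
  by elim: k => [|k [SN infN]] //=; have [] := nextP k _ SN infN.
have Ns_step k : next_ok k (Ns k) (Ns k.+1).
  by have [SN infN] := Ns_inv k; apply: nextP.
have Ns_sub k : included (Ns k.+1) (above (Ns k) (a k)) by case: (Ns_step k).
have a_in k : Ns k (a k) by apply: pickP; case: (Ns_inv k).
have a_incr : {homo a : i j / i < j}.
  apply: homo_ltn => [? ? ?|i]; first exact: ltn_trans.
  by case: (Ns_sub i _ (a_in i.+1)).
have Ns_decr j i : j <= i -> included (Ns i) (Ns j).
  move=> /subnKC <-; elim: (i - j) => [|d IH] x; first by rewrite addn0.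
  by rewrite addnS => /Ns_sub [/IH].
have image_sub j : included (image_of a (fun i => j <= i)) (Ns j).
  by move=> _ [i le_ji ->]; apply: Ns_decr le_ji _ (a_in i).
exists a; split=> // j; split; first exact: S_antitone (image_sub j) (proj1 (Ns_inv j)).
by apply: T_antitone (image_sub j.+1) _; case: (Ns_step j).
Qed.

End DiagonalSequence.

Lemma ramsey k (c : {fset nat} -> Prop) (N : nat -> Prop) : infinite_nat N ->
  exists M, [/\ infinite_nat M, included M N & exists b, monochromatic c k M b].
Proof.
elim: k c N => [|k IH] c N infN.
  exists N; split=> //.
  by case: (classic (c fset0)) => c0; [exists true | exists false];
    move=> A _ /cardfs0_eq ->; split=> // /c0.
pose T (_ x : nat) M := exists b, monochromatic (fun B => c (x |` B)) k M b.
have T_antitone j x M M' : included M' M -> T j x M -> T j x M'.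
  by move=> subM [b monoM]; exists b; apply: monochromatic_sub monoM.
have extend j x M : included M N -> infinite_nat M ->
    exists M', [/\ included M' M, infinite_nat M', included M' N & T j x M'].
  move=> subMN infM; have [M' [infM' subM' monoM']] := IH (fun B => c (x |` B)) M infM.
  by exists M'; split=> //; apply: included_trans subM' subMN.
have [a [a_incr a_tails]] := @diagonal_sequence (fun _ M => included M N) T
  (fun _ _ _ => included_trans) T_antitone extend N (fun _ => id) infN.
pose colour j := monochromatic (fun B => c (a j |` B)) k (image_of a (fun i => j < i)).
have [b inf_b] := infinite_pigeonhole colour (fun j => (a_tails j).2).
exists (image_of a (fun j => colour j b)).
split; first exact: infinite_image.
  by move=> _ [i _ ->]; apply: (a_tails 0).1; exists i.
exists b => A AI cardA.
have [m [mA min_m]] : exists m, is_fmin m A.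
  by apply: fmin_exists; rewrite -cardfs_gt0 cardA.
have [j mono_j def_m] := AI m mA; subst m.
rewrite -(fsetD1K mA); apply: mono_j.
  exact: fsubD1_image (fsub_image_from_min a_incr AI (conj mA min_m)).
by move: cardA; rewrite (cardfsD1 (a j)) mA => -[].
Qed.

Lemma small_sets_dichotomy {F k N} :
  hereditary F -> small_sets_in F k N -> infinite_nat N ->
  exists M, [/\ infinite_nat M, included M N &
    small_sets_in F k.+1 M \/ forall A, fsub_of A M -> (F A <-> #|` A| <= k)].
Proof.
move=> herF smallN infN.
have [M [infM subMN [b monoM]]] := ramsey k.+1 F N infN.
exists M; split=> //; case: b monoM => monoM; [left|right].
  move=> A AM; rewrite leq_eqVlt => /orP[/eqP cardA|ltA]; first exact/(monoM A AM).
  by apply: smallN ltA => x /AM /subMN.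
move=> A AM; split=> [FA|]; last by apply: smallN => x /AM /subMN.
rewrite leqNgt; apply/negP => /fsubset_of_card[B BA cardB].
suff BM : fsub_of B M by have := (monoM B BM cardB).1 (herF _ _ BA FA).
by move=> x /(fsubsetP BA) /AM.
Qed.

Theorem lemma4p8 (F : {fset nat} -> Prop) :
  (exists A, F A) -> hereditary F ->
  exists M : nat -> Prop, infinite_nat M /\
    ((exists d : nat, forall A : {fset nat}, fsub_of A M -> (F A <-> #|` A| <= d))
     \/
     (exists f : nat -> nat, strictly_increasing_on M f /\
        forall (A : {fset nat}) (m : nat), fsub_of A M -> is_fmin m A ->
          #|` A| <= f m -> F A)).
Proof.
move=> [A0 FA0] herF.
case: (classic (exists M, infinite_nat M /\ exists d : nat,
    forall A, fsub_of A M -> (F A <-> #|` A| <= d))) => [[M [infM ball]]|no_ball].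
  by exists M; split=> //; left.
have small0 : small_sets_in F 0 (fun _ => True).
  by move=> A _; rewrite leqn0 => /eqP /cardfs0_eq ->; apply: herF FA0; apply: fsub0set.
have extend k (x : nat) N : small_sets_in F k N -> infinite_nat N ->
    exists M, [/\ included M N, infinite_nat M, small_sets_in F k.+1 M & True].
  move=> smallN infN.
  have [M [infM subMN [smallM|ballM]]] := small_sets_dichotomy herF smallN infN.
    by exists M.
  by case: no_ball; exists M; split=> //; exists k.
have infT : infinite_nat (fun _ => True) by move=> n; exists n.
have [a [a_incr a_tails]] := @diagonal_sequence (small_sets_in F) (fun _ _ _ => True)
  (@small_sets_in_sub F) (fun _ _ _ _ _ _ => I) extend _ small0 infT.
exists (image_of a (fun _ => True)); split; first exact: infinite_image a_incr _ infT.
right; exists (index_in a_incr); split; first exact: index_in_increasing.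
move=> A m AI min_m; have [j _ def_m] := AI m (proj1 min_m); subst m.
rewrite index_in_incr => le_Aj.
by apply: (a_tails j).1 le_Aj; apply: fsub_image_from_min AI min_m.
Qed.
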